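(* Let $k\geq 2$ and $n\geq k$ be integers. Then in $\mathcal{H}$, $$ \sum_{\substack{r, s_i\geq 1\\ r+s_1+\cdots +s_{k-1}=n}} z_{r}\,\tilde{\sqcup}\, z_{s_1,\dots, s_{k-1}} = \sum_{\substack{t_i\geq 1\\ t_1+\cdots+t_{k}=n}} C(t_1,\dots, t_{k-1})\, z_{t_1,\dots, t_{k}}. $$
   Context: Let $\mathcal{H}$ be the free $\mathbb{Z}$-module on words in letters $z_s$ ($s\geq1$), with $z_{s_1,\dots,s_k}:=z_{s_1}\cdots z_{s_k}$ and $1$ the empty word. Let $\mathbb{Z}\langle x_0,x_1\rangle$ be the free $\mathbb{Z}$-module on words in two letters $x_0,x_1$, with the shuffle product $\sqcup$ defined bilinearly and recursively by $1\sqcup u=u\sqcup 1=u$ and $(au)\sqcup(bv)=a(u\sqcup (bv))+b((au)\sqcup v)$ for letters $a,b\in\{x_0,x_1\}$ and words $u,v$. Let $\rho$ be the $\mathbb{Z}$-linear bijection from $\mathbb{Z}\oplus \mathbb{Z}\langle x_0,x_1\rangle x_1$ (span of $1$ and words ending in $x_1$) onto $\mathcal{H}$ given by $\rho(1)=1$ and $\rho(x_0^{s_1-1}x_1\cdots x_0^{s_k-1}x_1)=z_{s_1,\dots,s_k}$. Define the product $\tilde{\sqcup}$ on $\mathcal{H}$ by $w_1\,\tilde{\sqcup}\,w_2=\rho\big(\rho^{-1}(w_1)\sqcup\rho^{-1}(w_2)\big)$. For positive integers $t_1,\dots,t_{k-1}$ ($k\geq 2$) with $T_j=t_1+\cdots+t_j$,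 set $C(t_1,\dots,t_{k-1})=\sum_{j=1}^{k-1}2^{T_j-j}+2^{T_{k-1}-(k-1)}$ (so for $k=2$, $C(t_1)=2^{t_1}$). *)

From mathcomp Require Import all_boot all_order all_algebra.
Set Implicit Arguments. Unset Strict Implicit. Unset Printing Implicit Defensive.
Import GRing.Theory Num.Theory.

(* Words in x0, x1 : false = x0, true = x1. *)
Definition word := seq bool.

(* Shuffle of two words, as the list (multiset) of words occurring with
   multiplicity in u ш v (each with coefficient 1). *)
Fixpoint shuffle (u v : word) {struct u} : seq word :=
  match u with
  | [::] => [:: v]
  | a :: u' =>
    let fix sh_v (v : word) : seq word :=
      match v with
      | [::] => [:: u]
      | b :: v' => map (cons a) (shuffle u' v) ++ map (cons b) (sh_v v')
      end in sh_v v
  end.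

Definition rho_inv (s : seq nat) : word :=
  flatten [seq rcons (nseq i.-1 false) true | i <- s].

(* rho on words ending in x1 (or empty): decode into indices. *)
Fixpoint rho_aux (c : nat) (w : word) : seq nat :=
  match w with
  | [::] => [::]
  | false :: w' => rho_aux c.+1 w'
  | true :: w' => c.+1 :: rho_aux 0 w'
  end.
Definition rho (w : word) : seq nat := rho_aux 0 w.

(* Elements of H (free Z-module on words z_{s_1..s_k}) are represented by
   their coefficient functions seq nat -> int (finitely supported). *)
Definition Helt := seq nat -> int.

Definition zH (s : seq nat) : Helt := fun w => Posz (w == s).

Definition tshuffle (s t : seq nat) : Helt :=
  fun w => (\sum_(u <- shuffle (rho_inv s) (rho_inv t)) zH (rho u) w)%R.

Fixpoint comps (m n : nat) : seq (seq nat) :=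
  match m with
  | 0 => if n == 0 then [:: [::]] else [::]
  | m'.+1 => flatten [seq [seq i :: t | t <- comps m' (n - i)] | i <- iota 1 n]
  end.

Definition Ccoef (t : seq nat) : nat :=
  \sum_(1 <= j < (size t).+1) 2 ^ (sumn (take j t) - j) + 2 ^ (sumn t - size t).

Example tshuffle_test1 : tshuffle [:: 1] [:: 1] [:: 1; 1] = Posz 2. Proof. by rewrite /tshuffle unlock. Qed.
Example tshuffle_test2 : tshuffle [:: 1] [:: 2] [:: 2; 1] = Posz 2. Proof. by rewrite /tshuffle unlock. Qed.
Example comps_test : comps 2 3 = [:: [:: 1; 2]; [:: 2; 1]]. Proof. by []. Qed.

From mathcomp Require Import all_boot all_order all_algebra.
From mathcomp Require Import zify.
Import GRing.Theory.
Set Implicit Arguments. Unset Strict Implicit. Unset Printing Implicit Defensive.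

(* The coefficient of z_w in z_r ~ш z_s counts the ways of splitting the word
   rho^{-1}(z_w) into two complementary subwords equal to rho^{-1}(z_r) and
   rho^{-1}(z_s). Summed over all (r, s), the left-hand side thus counts the
   splittings of rho^{-1}(z_w) into a subword with a single x1, at its end, and a
   subword with k - 1 letters x1, the last one at its end. Scanning the word from
   the left while the first subword is still open, each x0 may go to either subword
   as long as the second one still needs letters x1, and each x1 either closes the
   first subword (everything after it then goes to the second) or goes to the second.
   This gives C(t_1, ..., t_{k-1}) = 2^{t_1 - 1} (1 + C(t_2, ..., t_{k-1})), with
   C() = 1, which is the recursion satisfied by the closed formula. *)

Definition ends_x1 (u : word) := last true u.

Definition pos_seq (s : seq nat) := all (leq 1) s.

Lemma ends_x1_cons x u : ends_x1 (x :: u) = if u is [::] then x else ends_x1 u.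
Proof. by case: u. Qed.

Lemma rho_inv_cons i s : rho_inv (i :: s) = nseq i.-1 false ++ true :: rho_inv s.
Proof. by rewrite /rho_inv /= cat_rcons. Qed.

Lemma ends_x1_rho_inv s : ends_x1 (rho_inv s).
Proof. by elim: s => [|i s IHs] //; rewrite rho_inv_cons /ends_x1 last_cat. Qed.

Lemma count_rho_inv s : count id (rho_inv s) = size s.
Proof. by elim: s => [|i s IHs] //; rewrite rho_inv_cons count_cat count_nseq /= IHs. Qed.

Lemma size_rho_inv s : pos_seq s -> size (rho_inv s) = sumn s.
Proof.
elim: s => [|i s IHs] //= /andP[i_gt0 /IHs {}IHs].
by rewrite rho_inv_cons size_cat size_nseq /= IHs; lia.
Qed.

Lemma rho_aux_nseq c m u :
  rho_aux c (nseq m false ++ true :: u) = (c + m).+1 :: rho_aux 0 u.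
Proof. by elim: m c => [|m IHm] c /=; rewrite ?addn0 // IHm addSnnS. Qed.

Lemma rho_invK s : pos_seq s -> rho (rho_inv s) = s.
Proof.
elim: s => [|i s IHs] // /andP[i_gt0 /IHs {}IHs].
by rewrite rho_inv_cons /rho rho_aux_nseq prednK // -/(rho _) IHs.
Qed.

Lemma rho_inv_rho_aux c u : ends_x1 u ->
  rho_inv (rho_aux c u) = if u is [::] then [::] else nseq c false ++ u.
Proof.
elim: u c => [|x u IHu] c //; rewrite ends_x1_cons.
case: u IHu => [|y u] IHu ends_u; first by case: x ends_u => // _; rewrite rho_inv_cons.
case: x; first by rewrite [rho_aux _ _]/= rho_inv_cons IHu.
have -> : rho_aux c (false :: y :: u) = rho_aux c.+1 (y :: u) by [].
by rewrite IHu // -addn1 nseqD -catA.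
Qed.

Lemma rhoK u : ends_x1 u -> rho_inv (rho u) = u.
Proof. by move=> ends_u; rewrite /rho rho_inv_rho_aux //; case: u ends_u. Qed.

Lemma pos_seq_rho_aux c u : pos_seq (rho_aux c u).
Proof. by elim: u c => [|[] u IHu] c //=; rewrite IHu. Qed.

Lemma size_rho_aux c u : size (rho_aux c u) = count id u.
Proof. by elim: u c => [|[] u IHu] c //=; rewrite IHu. Qed.

Lemma sumn_rho u : ends_x1 u -> sumn (rho u) = size u.
Proof.
by move=> ends_u; rewrite -{2}(rhoK ends_u) size_rho_inv //; apply: pos_seq_rho_aux.
Qed.

Lemma eq_rho u s : ends_x1 u -> (s == rho u) = pos_seq s && (u == rho_inv s).
Proof.
move=> ends_u; apply/eqP/andP => [->|[pos_s /eqP ->]]; last by rewrite rho_invK.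
by rewrite rhoK // pos_seq_rho_aux.
Qed.

Lemma eq_rho_inv u s : pos_seq s -> (u == rho_inv s) = ends_x1 u && (rho u == s).
Proof.
move=> pos_s; apply/eqP/andP => [->|[ends_u /eqP <-]]; last by rewrite rhoK.
by rewrite ends_x1_rho_inv rho_invK.
Qed.

Lemma shuffle_cons x a y b : shuffle (x :: a) (y :: b) =
  map (cons x) (shuffle a (y :: b)) ++ map (cons y) (shuffle (x :: a) b).
Proof. by []. Qed.

Lemma shuffles0 a : shuffle a [::] = [:: a].
Proof. by case: a. Qed.

Lemma shuffle_ends_x1_size a b : ends_x1 a -> ends_x1 b ->
  all (fun u => ends_x1 u && (size u == size a + size b)) (shuffle a b).
Proof.
have cons_ok z u m : 0 < m -> ends_x1 u && (size u == m) ->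
    ends_x1 (z :: u) && (size (z :: u) == m.+1).
  case: u => [|v u] m_gt0 /andP[ends_u /eqP size_u]; first by rewrite -size_u in m_gt0.
  by rewrite ends_x1_cons -size_u ends_u eqxx.
elim: a b => [|x a IHa] b; first by move=> _ ends_b /=; rewrite ends_b eqxx.
elim: b => [|y b IHb] ends_xa ends_yb; first by rewrite shuffles0 /= ends_xa addn0 eqxx.
have ends_a : ends_x1 a by case: a ends_xa {IHa IHb}.
have ends_b : ends_x1 b by case: b ends_yb {IHb}.
rewrite shuffle_cons all_cat !all_map; apply/andP; split; apply/allP => u u_in.
  by rewrite addSn; apply: cons_ok; [rewrite addnS | exact: (allP (IHa _ ends_a ends_yb))].
by rewrite addnS; apply: cons_ok; [rewrite addSn | exact: (allP (IHb ends_xa ends_b))].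
Qed.

Fixpoint deshuffles (w : word) : seq (word * word) :=
  if w is c :: w' then
    [seq (c :: z.1, z.2) | z <- deshuffles w'] ++ [seq (z.1, c :: z.2) | z <- deshuffles w']
  else [:: ([::], [::])].

Lemma count_mem_map_cons (T : eqType) (x : T) v s :
  count_mem v (map (cons x) s) = if v is y :: v' then (x == y) * count_mem v' s else 0.
Proof.
elim: s => [|u s IHs] /=; first by case: v => // *; rewrite muln0.
by rewrite IHs; case: v {IHs} => [|y v] //=; rewrite eqseq_cons mulnDr -mulnb.
Qed.

Lemma count_mem_map_consl (T U : eqType) (c : T) a (b : U) (s : seq (seq T * U)) :
  count_mem (a, b) [seq (c :: z.1, z.2) | z <- s] =
  if a is x :: a' then (c == x) * count_mem (a', b) s else 0.
Proof.
elim: s => [|[z1 z2] s IHs] /=; first by case: a => // *; rewrite muln0.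
by rewrite IHs; case: a {IHs} => [|x a] //=;
  rewrite !xpair_eqE eqseq_cons -andbA mulnDr -mulnb.
Qed.

Lemma count_mem_map_consr (T U : eqType) (c : T) (a : U) b (s : seq (U * seq T)) :
  count_mem (a, b) [seq (z.1, c :: z.2) | z <- s] =
  if b is y :: b' then (c == y) * count_mem (a, b') s else 0.
Proof.
elim: s => [|[z1 z2] s IHs] /=; first by case: b => // *; rewrite muln0.
rewrite IHs; case: b {IHs} => [|y b] /=; first by rewrite xpair_eqE andbF.
by rewrite !xpair_eqE eqseq_cons andbCA mulnDr -mulnb.
Qed.

Lemma count_shuffle_deshuffles w a b :
  count_mem w (shuffle a b) = count_mem (a, b) (deshuffles w).
Proof.
elim: w a b => [|c w IHw] a b.
  case: a => [|x a]; case: b => [|y b] //.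
  by rewrite shuffle_cons count_cat !count_mem_map_cons.
rewrite /= count_cat count_mem_map_consl count_mem_map_consr.
case: a => [|x a]; case: b => [|y b] //.
- by rewrite -IHw /= eqseq_cons !addn0 -mulnb (eq_sym y).
- by rewrite -IHw !shuffles0 /= eqseq_cons !addn0 -mulnb (eq_sym x).
by rewrite shuffle_cons count_cat !count_mem_map_cons !IHw !(eq_sym c).
Qed.

Lemma size_deshuffles w :
  all (fun z : word * word => size z.1 + size z.2 == size w) (deshuffles w).
Proof.
elim: w => [|c w IHw] //=; rewrite all_cat !all_map.
by apply/andP; split; apply/allP => z /(allP IHw) /eqP /= <-; rewrite ?addSn ?addnS.
Qed.

Lemma count_deshuffles_nil (P : pred word) w :
  count (fun z : word * word => (z.1 == [::]) && P z.2) (deshuffles w) = P w.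
Proof.
elim: w P => [|c w IHw] P /=; first by rewrite addn0.
rewrite count_cat !count_map (eq_count (a2 := pred0)) ?count_pred0 //.
exact: IHw (fun u => P (c :: u)).
Qed.

Definition depth_word j (u : word) := ends_x1 u && (count id u == j).

Lemma count_x1_gt0 u : ends_x1 u -> (0 < count id u) = (u != [::]).
Proof.
case: u => [|x u] // ends_xu; rewrite -has_count; apply/hasP.
by exists (last x u); [exact: mem_last | exact: ends_xu].
Qed.

Lemma depth_word_rho_inv j s : depth_word j (rho_inv s) = (size s == j).
Proof. by rewrite /depth_word ends_x1_rho_inv count_rho_inv. Qed.

Lemma depth_word0 u : depth_word 0 u = (u == [::]).
Proof.
rewrite /depth_word; case ends_u: (ends_x1 u); last by case: u ends_u.
by rewrite -[count _ _ == 0]negbK -lt0n count_x1_gt0 ?negbK.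
Qed.

Lemma depth_word_x0 j u : depth_word j (false :: u) = (0 < j) && depth_word j u.
Proof.
rewrite /depth_word ends_x1_cons /= add0n; case: u => [|x u]; first by case: j.
case ends_u: (ends_x1 (x :: u)); last by rewrite andbF.
by case: eqP => [<-|]; rewrite ?andbF // count_x1_gt0.
Qed.

Lemma depth_word_x1 j u :
  depth_word j (true :: u) = if j is j'.+1 then depth_word j' u else false.
Proof.
have ends_x1u : ends_x1 (true :: u) = ends_x1 u by case: u.
by rewrite /depth_word ends_x1u /= add1n; case: j => [|j]; rewrite ?andbF ?eqSS.
Qed.

Definition depth_splits j w :=
  count (fun z : word * word => depth_word 1 z.1 && depth_word j z.2) (deshuffles w).

Lemma depth_splits_x0 j w : depth_splits j (false :: w) = 2 ^ (0 < j) * depth_splits j w.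
Proof.
rewrite /depth_splits /= count_cat !count_map.
under eq_count => z do rewrite /= depth_word_x0 /=.
under [X in _ + X]eq_count => z do rewrite /= depth_word_x0 andbCA.
by case: j => [|j]; rewrite /= ?count_pred0 ?addn0 ?expn0 ?mul1n // expn1 mul2n -addnn.
Qed.

Lemma depth_splits_x1 j w : depth_splits j (true :: w) =
  depth_word j w + (if j is j'.+1 then depth_splits j' w else 0).
Proof.
rewrite /depth_splits /= count_cat !count_map.
under eq_count => z do rewrite /= depth_word_x1 depth_word0.
rewrite count_deshuffles_nil; congr (_ + _).
case: j => [|j]; last by apply: eq_count => z /=; rewrite depth_word_x1.
by rewrite (eq_count (a2 := pred0)) ?count_pred0 // => z /=; rewrite depth_word_x1 andbF.
Qed.

Lemma depth_splits_nseq j c w :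
  depth_splits j (nseq c false ++ w) = 2 ^ ((0 < j) * c) * depth_splits j w.
Proof.
elim: c => [|c IHc]; first by rewrite muln0 mul1n.
by rewrite /= depth_splits_x0 IHc mulnA -expnD mulnS.
Qed.

Lemma pos_seq_take j s : pos_seq s -> pos_seq (take j s).
Proof.
by move=> pos_s; rewrite -(cat_take_drop j s) /pos_seq all_cat in pos_s; case/andP: pos_s.
Qed.

Lemma size_le_sumn s : pos_seq s -> size s <= sumn s.
Proof. by elim: s => [|i s IHs] //= /andP[i_gt0 /IHs]; lia. Qed.

Lemma Ccoef_nil : Ccoef [::] = 1.
Proof. by rewrite /Ccoef big_geq. Qed.

Lemma Ccoef_cons t u : 0 < t -> pos_seq u -> Ccoef (t :: u) = 2 ^ t.-1 * (1 + Ccoef u).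
Proof.
move=> t_gt0 pos_u.
have shift m j : j <= m -> 2 ^ (t + m - j.+1) = 2 ^ t.-1 * 2 ^ (m - j).
  by move=> le_jm; rewrite -expnD; congr (2 ^ _); lia.
rewrite /Ccoef big_nat_recl //= take0 addn0 subn1 mulnDr muln1 mulnDr big_distrr -addnA.
congr (_ + _); congr (_ + _); last by rewrite shift // size_le_sumn.
rewrite !big_nat; apply: eq_bigr => j /andP[_ lt_j_size] /=; rewrite shift //.
by rewrite -{1}(@size_takel j _ u) ?size_le_sumn ?pos_seq_take.
Qed.

Lemma depth_splits_rho_inv j s : pos_seq s ->
  depth_splits j (rho_inv s) = (size s == j.+1) * Ccoef (take j s).
Proof.
elim: s j => [|t s IHs] j // /andP[t_gt0 pos_s].
rewrite rho_inv_cons depth_splits_nseq depth_splits_x1 depth_word_rho_inv /= eqSS.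
case: j => [|j]; first by rewrite mul1n addn0 Ccoef_nil muln1.
rewrite IHs // mul1n Ccoef_cons ?pos_seq_take //.
by case: (size s == j.+1); rewrite ?muln0 ?mul1n.
Qed.

Lemma count_sum (T : Type) (a : pred T) s : count a s = \sum_(x <- s) a x.
Proof. by rewrite -sumn_count sumnE big_map. Qed.

Lemma sum_eqb_mul (T : eqType) (r : seq T) c (F : T -> nat) :
  \sum_(i <- r) (i == c) * F i = count_mem c r * F c.
Proof.
elim: r => [|i r IHr]; first by rewrite big_nil.
by rewrite big_cons IHr /= mulnDl; case: eqP => [->|]; rewrite ?mul1n.
Qed.

Lemma count_mem_comps j m s :
  count_mem s (comps j m) = [&& pos_seq s, size s == j & sumn s == m].
Proof.
elim: j m s => [|j IHj] m s; first by case: m; case: s => //= *; rewrite andbF.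
rewrite [comps _ _]/= (count_flatten _ (pred1 s)) sumnE !big_map.
under eq_bigr do rewrite count_mem_map_cons.
case: s => [|h s]; first by rewrite big1.
under eq_bigr do rewrite IHj.
rewrite sum_eqb_mul count_uniq_mem ?iota_uniq // mem_iota /= eqSS.
case: (pos_seq s) (size s == j) => [] []; rewrite ?andbF ?muln0 //= ?muln1 ?andbT.
by case: (ltnP 0 h) => h_gt0; case: eqP; case: eqP => //=; lia.
Qed.

Lemma mem_comps j m s : (s \in comps j m) = [&& pos_seq s, size s == j & sumn s == m].
Proof. by rewrite -has_pred1 has_count count_mem_comps lt0b. Qed.

Lemma sum_comps_rho_inv j m u :
  \sum_(s <- comps j m) (u == rho_inv s) = depth_word j u && (size u == m).
Proof.
rewrite /depth_word; case ends_u: (ends_x1 u) => /=; last first.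
  by rewrite big1 // => s _; apply/eqP; rewrite eqb0; apply: contraFN ends_u => /eqP ->;
    apply: ends_x1_rho_inv.
rewrite big_seq (eq_bigr (fun s => (s == rho u : nat))); last first.
  by move=> s; rewrite mem_comps => /and3P[pos_s _ _]; rewrite eq_rho_inv // ends_u eq_sym.
rewrite -big_seq -count_sum count_mem_comps pos_seq_rho_aux /rho size_rho_aux.
by rewrite -/(rho u) sumn_rho.
Qed.

Lemma eq_rho_inv1 u i : 0 < i -> (u == rho_inv [:: i]) = depth_word 1 u && (size u == i).
Proof.
move=> i_gt0; apply/eqP/andP => [->|[/andP[ends_u /eqP count_u] /eqP size_u]].
  by rewrite depth_word_rho_inv size_rho_inv /= ?i_gt0 ?addn0.
rewrite -(rhoK ends_u); congr rho_inv.
have := sumn_rho ends_u; have := size_rho_aux 0 u; rewrite -/(rho u) count_u size_u.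
by case: (rho u) => [|x [|y r]] //= _; rewrite addn0 => ->.
Qed.

Lemma depth_word1_size_gt0 u : depth_word 1 u -> 0 < size u.
Proof. by case: u. Qed.

Lemma sum_comps_split j n a b :
  \sum_(p <- comps j.+1 n) ((a, b) == (rho_inv [:: head 0 p], rho_inv (behead p))) =
  [&& depth_word 1 a, depth_word j b & size a + size b == n].
Proof.
rewrite [comps _ _]/= big_flatten big_map.
under eq_bigr => i _ do rewrite big_map /=.
under eq_bigr => i _ do under eq_bigr => t _ do rewrite xpair_eqE -mulnb.
under eq_bigr => i _ do rewrite -big_distrr /= sum_comps_rho_inv.
rewrite big_seq (eq_bigr (fun i => (i == size a) *
    (depth_word 1 a * (depth_word j b && (size b == n - i))))); last first.
  move=> i; rewrite mem_iota => /andP[i_gt0 _].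
  by rewrite eq_rho_inv1 // -mulnb (eq_sym i) mulnCA mulnA.
rewrite -big_seq sum_eqb_mul count_uniq_mem ?iota_uniq // mem_iota !mulnb.
congr (nat_of_bool _); case depth_a: (depth_word 1 a); rewrite /= ?andbF //.
have := depth_word1_size_gt0 depth_a.
by case: (depth_word j b); rewrite /= ?andbF // => a_gt0; apply/idP/idP; lia.
Qed.

Lemma sum_comps_deshuffles j n w :
  \sum_(p <- comps j.+1 n)
      count_mem (rho_inv [:: head 0 p], rho_inv (behead p)) (deshuffles w) =
  (size w == n) * depth_splits j w.
Proof.
under eq_bigr do rewrite count_sum.
rewrite exchange_big /=.
rewrite (eq_bigr (fun z : word * word =>
  [&& depth_word 1 z.1, depth_word j z.2 & size z.1 + size z.2 == n] : nat)); last first.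
  by case=> a b _; rewrite -sum_comps_split; apply: eq_bigr => p _; rewrite eq_sym.
rewrite -count_sum /depth_splits.
rewrite (eq_in_count (a2 := fun z : word * word =>
  (size w == n) && (depth_word 1 z.1 && depth_word j z.2))); last first.
  by move=> z /(allP (size_deshuffles w)) /eqP ->; rewrite andbA andbC.
by case: (size w == n); rewrite /= ?mul1n ?mul0n ?count_pred0.
Qed.

Lemma sum_comps_coef j n w :
  \sum_(p <- comps j.+1 n)
      pos_seq w *
        count_mem (rho_inv [:: head 0 p], rho_inv (behead p)) (deshuffles (rho_inv w)) =
  \sum_(t <- comps j.+1 n) Ccoef (take j t) * (w == t).
Proof.
under [RHS]eq_bigr do rewrite mulnC eq_sym.
rewrite -big_distrr sum_comps_deshuffles sum_eqb_mul count_mem_comps /=.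
case pos_w: (pos_seq w); rewrite ?mul0n //= mul1n.
rewrite size_rho_inv // depth_splits_rho_inv //.
by case: (sumn w == n); case: (size w == j.+1); rewrite ?mul0n ?mul1n ?muln0.
Qed.

Local Open Scope ring_scope.

Lemma tshuffle_coef s t w :
  tshuffle s t w =
    (pos_seq w * count_mem (rho_inv s, rho_inv t) (deshuffles (rho_inv w)))%N%:Z.
Proof.
rewrite /tshuffle /zH -raddf_sum -count_sum -count_shuffle_deshuffles; congr Posz.
have ends_sh := shuffle_ends_x1_size (ends_x1_rho_inv s) (ends_x1_rho_inv t).
rewrite (eq_in_count (a1 := fun u => w == rho u)
                     (a2 := fun u => pos_seq w && (u == rho_inv w))); last first.
  by move=> u /(allP ends_sh) /andP[ends_u _]; rewrite eq_rho.
by case: (pos_seq w); rewrite /= ?mul1n ?count_pred0.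
Qed.

Theorem theorem2p5 (k n : nat) (hk : (2 <= k)%N) (hn : (k <= n)%N) :
  forall w : seq nat,
    \sum_(p <- comps k n) tshuffle [:: head 0%N p] (behead p) w
    = \sum_(t <- comps k n) (Ccoef (take k.-1 t))%:Z * zH t w.
Proof.
move=> w; case: k hk hn => [|j] // _ _.
under eq_bigr do rewrite tshuffle_coef.
under [RHS]eq_bigr do rewrite /zH -PoszM.
by rewrite -!raddf_sum sum_comps_coef.
Qed.
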